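(* Let $\alpha>0$ and let $\mu\subset\lambda$ be partitions with $|\lambda-\mu|=r$. Then $$\varepsilon(J_{\lambda/\mu})=\frac1{r!}\sum\prod_{i=1}^r\varepsilon\big(J_{\mu^{(i-1)}/\mu^{(i)}}\big),$$ summed over all chains of partitions $\lambda=\mu^{(0)}\supset\mu^{(1)}\supset\cdots\supset\mu^{(r)}=\mu$ with $|\mu^{(i-1)}-\mu^{(i)}|=1$ for $1\le i\le r$.
   Context: $J_\lambda=J_\lambda(x;\alpha)$ is the Jack symmetric function (coefficient of $p_1^{|\lambda|}$ equal to $1$), and the skew Jack functions $J_{\lambda/\mu}$ are defined by $J_\lambda(x,y)=\sum_{\mu\subset\lambda}J_{\lambda/\mu}(x)J_\mu(y)$ for two sets of variables $x,y$. $\varepsilon:\Lambda\to\mathbb{Q}(\alpha)$ is the ring homomorphism with $\varepsilon(p_1)=1$ and $\varepsilon(p_r)=0$ for $r>1$; equivalently $\varepsilon(J_{\lambda/\mu})$ is the coefficient of $p_1^{|\lambda-\mu|}$ in $J_{\lambda/\mu}$. *)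

From HB Require Import structures.
From mathcomp Require Import all_boot all_order all_algebra.
From mathcomp Require Import mpoly.
Set Implicit Arguments. Unset Strict Implicit. Unset Printing Implicit Defensive.
Import Order.TTheory GRing.Theory Num.Theory.
Local Open Scope ring_scope.

Definition is_part (l : seq nat) : bool := sorted geq l && (0%N \notin l).

Definition psize (l : seq nat) : nat := sumn l.

Definition part_sub (mu la : seq nat) : bool :=
  (size mu <= size la)%N && all (fun i => nth 0%N mu i <= nth 0%N la i)%N (iota 0 (size mu)).

Definition dominated (nu la : seq nat) : bool :=
  (psize nu == psize la) &&
  all (fun k => sumn (take k nu) <= sumn (take k la))%N (iota 0 (size nu + size la).+1).

Fixpoint boxes (la : seq nat) : seq (seq nat) :=
  if la is a :: l then [seq x :: y | x <- iota 0 a.+1, y <- boxes l] else [:: [::]].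

Definition subparts (la : seq nat) : seq (seq nat) :=
  undup [seq filter (predC1 0%N) t | t <- boxes la & sorted geq t].

(* chains la = c_0 \supset c_1 \supset ... \supset c_r = mu of partitions,
   each step removing exactly one box; a chain is returned as the
   list [:: c_0; ...; c_r] *)
Fixpoint chains (r : nat) (la mu : seq nat) : seq (seq (seq nat)) :=
  match r with
  | 0 => if la == mu then [:: [:: la]] else [::]
  | r'.+1 =>
      flatten [seq [seq la :: c | c <- chains r' nu mu]
              | nu <- subparts la & psize nu == (psize la).-1]
  end.

(* An element of Lambda of degree <= n is represented as a polynomial in
   the power sums p_1, ..., p_n : the variable 'X_i (i : 'I_n) stands for
   p_(i+1).  This is the ring R[p_1,...,p_n], which contains every
   symmetric function of degree <= n. *)

Section Lam.
Variables (R : realFieldType) (n : nat).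

Definition Lam := {mpoly R[n]}.

Definition pweight (m : 'X_{1..n}) : nat := (\sum_(i < n) i.+1 * m i)%N.

Definition phomog (d : nat) (f : Lam) : bool := all (fun m => pweight m == d) (msupp f).

Definition eps (f : Lam) : R := f.@[fun i : 'I_n => if val i == 0%N then 1 else 0].

(* the alpha-scalar product <p_nu, p_kappa> = delta z_nu alpha^(l(nu)) *)
Definition zee (alpha : R) (m : 'X_{1..n}) : R :=
  \prod_(i < n) ((i.+1)%:R ^+ m i * (m i)`!%:R * alpha ^+ m i).

Definition jscal (alpha : R) (f g : Lam) : R :=
  \sum_(m <- msupp f) f@_m * g@_m * zee alpha m.

(* realization in n ordinary variables x_1..x_n : p_k |-> sum_j x_j^k *)
Definition psum (k : nat) : {mpoly R[n]} := \sum_(j < n) 'X_j ^+ k.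
Definition toX (f : Lam) : {mpoly R[n]} := comp_mpoly [tuple psum i.+1 | i < n] f.

Definition mshape (a : 'X_{1..n}) : seq nat :=
  filter (predC1 0%N) (sort geq [seq a j | j <- enum 'I_n]).

(* f (in x-variables) lies in the span of the m_nu with nu <= la *)
Definition dom_triang (la : seq nat) (f : Lam) : bool :=
  all (fun a => dominated (mshape a) la) (msupp (toX f)).

(* J is the family of Jack functions J_la (for |la| <= n), normalized by
   coefficient of p_1^|la| equal to 1: J_la is homogeneous of degree |la|,
   J_la = sum_(nu <= la) c_nu m_nu, the J_la are pairwise orthogonal for
   the alpha-scalar product, and eps(J_la) = 1. *)
Definition is_jack (alpha : R) (J : seq nat -> Lam) : Prop :=
  forall la, is_part la -> (psize la <= n)%N ->
    [/\ phomog (psize la) (J la),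
        dom_triang la (J la),
        eps (J la) = 1 &
        forall mu, is_part mu -> psize mu = psize la -> mu <> la ->
          jscal alpha (J la) (J mu) = 0].

(* two sets of variables: p_k(x) = 'X_(lshift n k), p_k(y) = 'X_(rshift n k) *)
Definition inx (f : Lam) : {mpoly R[n + n]} :=
  comp_mpoly [tuple 'X_(lshift n i) | i < n] f.
Definition iny (f : Lam) : {mpoly R[n + n]} :=
  comp_mpoly [tuple 'X_(rshift n i) | i < n] f.
Definition coprod (f : Lam) : {mpoly R[n + n]} :=
  comp_mpoly [tuple 'X_(lshift n i) + 'X_(rshift n i) | i < n] f.

(* S la mu = J_(la/mu) : J_la(x,y) = sum_(mu \subset la) J_(la/mu)(x) J_mu(y) *)
Definition is_skew_jack (J : seq nat -> Lam) (S : seq nat -> seq nat -> Lam) : Prop :=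
  forall la, is_part la -> (psize la <= n)%N ->
    coprod (J la) = \sum_(mu <- subparts la) inx (S la mu) * iny (J mu).

End Lam.

From HB Require Import structures.
From mathcomp Require Import all_boot all_order all_algebra.
From mathcomp Require Import mpoly.
From mathcomp Require Import zify.
Set Implicit Arguments. Unset Strict Implicit. Unset Printing Implicit Defensive.
Import Order.TTheory GRing.Theory Num.Theory.

(* Substituting eps for the first set of power sums in the defining identity of
   the skew Jack functions gives
     J_la(p_1 + 1, p_2, ...) = sum_mu eps(J_(la/mu)) J_mu.
   By Taylor's formula in p_1, the weight-(|la| - r) part of the left-hand side
   is (1/r!) (d/dp_1)^r J_la.  For r = 1 this says that d/dp_1 J_nu is the sum of
   eps(J_(nu/kappa)) J_kappa over the kappa obtained by removing one box from nu;
   iterating, (d/dp_1)^r J_la is a sum over chains of removed boxes.  The J_mu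
   are nonzero and orthogonal for the positive definite alpha-scalar product, so
   comparing the coefficients of J_mu gives the formula. *)


Lemma mem_boxes la t : (t \in boxes la) = (size t == size la) && all2 leq t la.
Proof.
elim: la t => [|a l IH] t; first by case: t.
rewrite /boxes -/boxes; apply/flatten_mapP/idP.
  case=> x hx /mapP[u hu ->] /=.
  move: hu hx; rewrite IH mem_iota add0n ltnS eqSS.
  by move=> /andP[-> ->] /andP[_ ->].
case: t => [|x t] //=; rewrite eqSS => /andP[hs /andP[hx ht]]; exists x.
  by rewrite -[0 :: _]/(iota 0 a.+1) mem_iota ltnS.
by apply: map_f; rewrite IH hs.
Qed.

Lemma leq_sumn2 s t : all2 leq s t -> sumn s <= sumn t.
Proof. by elim: s t => [|x s IH] [|y t] //= /andP[hxy /IH]; apply: leq_add. Qed.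

Lemma sumn_filter_neq0 s : sumn (filter (predC1 0) s) = sumn s.
Proof. by elim: s => [|x s IH] //=; case: eqP => [->|_] /=; rewrite IH. Qed.

Lemma size_leq_sumn s : 0 \notin s -> size s <= sumn s.
Proof.
elim: s => [|x s IH] //=; rewrite in_cons negb_or => /andP[hx /IH].
by rewrite -add1n; apply: leq_add; rewrite lt0n eq_sym.
Qed.

Lemma nth_leq_sumn s i : nth 0 s i <= sumn s.
Proof.
elim: s i => [|x s IH] [|i] //=; first exact: leq_addr.
exact: leq_trans (IH i) (leq_addl _ _).
Qed.

Lemma part_nil s : is_part s -> psize s = 0 -> s = [::].
Proof. by case/andP=> _ /size_leq_sumn; rewrite /psize; case: s => //= x s; lia. Qed.

Lemma geq_trans : transitive geq.
Proof. by move=> a b c hab hbc; apply: leq_trans hbc hab. Qed.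

Lemma sorted_geq_cat_nseq0 s k : sorted geq s -> sorted geq (s ++ nseq k 0).
Proof.
rewrite !sorted_pairwise //; try exact: geq_trans.
rewrite pairwise_cat => ->; apply/andP; split.
  by apply/allrelP => x y _ /nseqP[-> _].
by elim: k => //= k ->; rewrite andbT; apply/allP => y /nseqP[-> _].
Qed.

Lemma subparts_part la k : k \in subparts la -> is_part k.
Proof.
rewrite mem_undup => /mapP[t]; rewrite mem_filter => /andP[hs _] ->.
rewrite /is_part mem_filter /= andbT.
exact: (sorted_filter geq_trans).
Qed.

Lemma psize_subparts la k : k \in subparts la -> psize k <= psize la.
Proof.
rewrite mem_undup => /mapP[t]; rewrite mem_filter mem_boxes => /and3P[_ _ ht] ->.
by rewrite /psize sumn_filter_neq0 leq_sumn2.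
Qed.

Lemma mem_subparts la mu : is_part mu -> part_sub mu la -> mu \in subparts la.
Proof.
move=> /andP[hso h0] /andP[hsz /allP hle].
pose t := mu ++ nseq (size la - size mu) 0.
have szt : size t = size la by rewrite size_cat size_nseq subnKC.
rewrite mem_undup; apply/mapP; exists t.
  rewrite mem_filter mem_boxes szt eqxx /=; apply/andP; split.
    exact: sorted_geq_cat_nseq0.
  rewrite all2E szt eqxx; apply/(all_nthP (0, 0)) => i.
  rewrite size_zip szt minnn => hi; rewrite nth_zip ?szt //= nth_cat nth_nseq.
  by case: ifP => [hm|_]; [apply: hle; rewrite mem_iota | case: ifP].
rewrite filter_cat filter_nseq /= cats0; apply/esym/all_filterP/allP => x hx /=.
by apply: contraNneq h0 => <-.
Qed.

Lemma subparts_uniq la : uniq (subparts la).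
Proof. exact: undup_uniq. Qed.

Lemma part_sub_nseq n mu : is_part mu -> psize mu <= n -> part_sub mu (nseq n n).
Proof.
move=> /andP[_ h0] hn; have hs : size mu <= n := leq_trans (size_leq_sumn h0) hn.
rewrite /part_sub size_nseq hs; apply/allP => i; rewrite mem_iota => /andP[_ hi].
by rewrite nth_nseq (leq_trans hi hs) (leq_trans (nth_leq_sumn mu i) hn).
Qed.

Definition parts_upto n := [seq mu <- subparts (nseq n n) | psize mu <= n].

Lemma parts_upto_uniq n : uniq (parts_upto n).
Proof. by rewrite filter_uniq ?subparts_uniq. Qed.

Lemma mem_parts_upto n mu : (mu \in parts_upto n) = is_part mu && (psize mu <= n).
Proof.
rewrite mem_filter andbC; apply/andP/andP => [[/subparts_part]|[hp hn]] //.
by rewrite hn mem_subparts ?part_sub_nseq.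
Qed.

Lemma part_parts_upto n la : la \in parts_upto n -> is_part la.
Proof. by rewrite mem_parts_upto => /andP[]. Qed.

Lemma psize_parts_upto n la : la \in parts_upto n -> psize la <= n.
Proof. by rewrite mem_parts_upto => /andP[]. Qed.

Lemma subparts_parts_upto n la :
  psize la <= n -> {subset subparts la <= parts_upto n}.
Proof.
move=> hn k hk; rewrite mem_parts_upto (subparts_part hk).
exact: leq_trans (psize_subparts hk) hn.
Qed.

Lemma head_chains r la mu c : c \in chains r la mu -> nth [::] c 0 = la.
Proof.
case: r => [|r] /=; first by case: eqP => // _; rewrite inE => /eqP ->.
by case/flattenP=> _ /mapP[nu _ ->] /mapP[c' _ ->].
Qed.

Section ChainSum.
Variables (R : nzRingType) (e : seq nat -> seq nat -> R).
Local Open Scope ring_scope.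

Definition chain_sum r la mu : R :=
  \sum_(c <- chains r la mu) \prod_(i < r) e (nth [::] c i) (nth [::] c i.+1).

Lemma chain_sum0 la mu : chain_sum 0 la mu = (la == mu)%:R.
Proof. by rewrite /chain_sum /=; case: eqP; rewrite ?big_seq1 ?big_ord0 ?big_nil. Qed.

Lemma chain_sumS r la mu : chain_sum r.+1 la mu =
  \sum_(nu <- subparts la | psize nu == (psize la).-1) e la nu * chain_sum r nu mu.
Proof.
rewrite /chain_sum /= big_flatten /= big_map big_filter.
apply: eq_bigr => nu _; rewrite big_map mulr_sumr big_seq [RHS]big_seq.
by apply: eq_bigr => c hc; rewrite big_ord_recl /= (head_chains hc).
Qed.

End ChainSum.

Local Open Scope ring_scope.

Section Substitution.
Variable R : comNzRingType.

Lemma comp_mpolyA n k l (p : {mpoly R[n]}) (lq : n.-tuple {mpoly R[k]})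
    (lr : k.-tuple {mpoly R[l]}) :
  (p \mPo lq) \mPo lr = p \mPo [tuple tnth lq i \mPo lr | i < n].
Proof.
rewrite [p \mPo lq]comp_mpolyEX [p \mPo _]comp_mpolyEX raddf_sum /=.
apply: eq_bigr => m _; rewrite comp_mpolyZ !comp_mpolyX rmorph_prod /=.
by congr (_ *: _); apply: eq_bigr => i _; rewrite rmorphXn tnth_mktuple.
Qed.

Lemma comp_mpoly_cst n k (p : {mpoly R[n]}) (c : 'I_n -> R) :
  p \mPo [tuple (c i)%:MP_[k] | i < n] = (p.@[c])%:MP.
Proof.
rewrite comp_mpolyEX mevalE raddf_sum /=; apply: eq_bigr => m _.
rewrite comp_mpolyX -mul_mpolyC mpolyCM rmorph_prod /=; congr (_ * _).
by apply: eq_bigr => i _; rewrite tnth_mktuple rmorphXn.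
Qed.

Definition eps_pt n (i : 'I_n) : R := if val i == 0%N then 1 else 0.

Definition shift_p1 n (f : {mpoly R[n]}) :=
  f \mPo [tuple 'X_i + (eps_pt i)%:MP | i < n].

Lemma shift_p1_0 (f : {mpoly R[0]}) : shift_p1 f = f.
Proof.
rewrite /shift_p1 (tuple0 [tuple _ | i < 0]) -(tuple0 [tuple 'X_i | i < 0]).
exact: comp_mpoly_id.
Qed.

Lemma mnmwgt_U0 n j : mnmwgt (U_(@ord0 n) *+ j)%MM = j.
Proof. by elim: j => [|j IH]; rewrite ?mulm0n ?mnmwgt0 // mulmS mnmwgtD mnmwgt1 IH. Qed.

Section Taylor.
Variable n : nat.
Implicit Types (m : 'X_{1..n.+1}) (f : {mpoly R[n.+1]}).

Lemma mnm_split0 m : m = (U_(ord0) *+ m ord0 + (m - U_(ord0) *+ m ord0))%MM.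
Proof.
apply/mnmP => i; rewrite mnmDE mnmBE mulmnE mnm1E.
by case: eqP => [<-|_]; rewrite ?mul1n ?subnn ?addn0 // mul0n subn0.
Qed.

Lemma shift_p1_X m : let m' := (m - U_(ord0) *+ m ord0)%MM in
  shift_p1 'X_[m] =
    \sum_(j < (m ord0).+1) 'C(m ord0, j)%:R *: 'X_[U_(ord0) *+ j + m'].
Proof.
move=> m'; rewrite /shift_p1 comp_mpolyX big_ord_recl tnth_mktuple /eps_pt /= mpolyC1.
have -> : \prod_(i < n) tnth [tuple 'X_i + (eps_pt i)%:MP | i < n.+1] (lift ord0 i)
              ^+ m (lift ord0 i) = 'X_[m'].
  rewrite mpolyXE_id big_ord_recl mnmBE mulmnE mnm1E eqxx mul1n subnn expr0 mul1r.
  apply: eq_bigr => i _; rewrite tnth_mktuple /eps_pt /= mpolyC0 addr0.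
  by rewrite mnmBE mulmnE mnm1E (negbTE (neq_lift _ _)) mul0n subn0.
rewrite exprD1n mulr_suml; apply: eq_bigr => j _.
by rewrite -mulr_natl -scaler_nat -scalerAl mpolyXn mpolyXD mul1r scalerAl.
Qed.

(* Only the term j = m_1 - r of the binomial expansion of (p_1 + 1)^(m_1) has
   weight d - r, and r! * 'C(m_1, m_1 - r) is the falling factorial m_1^_r. *)
Lemma pihomog_shift_p1_X m d r : mnmwgt m = d -> (r <= d)%N ->
  r`!%:R *: pihomog mnmwgt (d - r) (shift_p1 'X_[m]) = 'X_[m]^`M(ord0, r).
Proof.
move=> hd hr; rewrite shift_p1_X mderivnX [pihomog _ _ _]linear_sum scaler_sumr /=.
set a := m ord0; set m' := (m - U_(ord0) *+ a)%MM.
have hw : (mnmwgt m' + a = d)%N.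
  by rewrite addnC -[a](mnmwgt_U0 n) -mnmwgtD -mnm_split0.
under eq_bigr do rewrite linearZ /= pihomogX /= mnmwgtD mnmwgt_U0.
have [hra|har] := leqP r a; last first.
  rewrite ffact_small // scale0r big1 // => j _.
  by rewrite ifN ?scaler0 //; have := ltn_ord j; lia.
rewrite (bigD1 (Ordinal (leq_ltn_trans (leq_subr r a) (ltnSn a)))) //= big1 ?addr0.
  rewrite ifT; last by apply/eqP; lia.
  rewrite bin_sub // scalerA -natrM mulnC bin_ffact.
  congr (_ *: 'X_[_]); apply/mnmP => i; rewrite !mnmDE !mnmBE !mulmnE !mnm1E.
  by case: eqP => [<-|_]; rewrite ?mul1n ?subnn ?addn0 // !mul0n !subn0.
move=> j /eqP hj; rewrite ifN ?scaler0 //; apply/eqP => e.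
by apply: hj; apply/val_inj => /=; lia.
Qed.

Lemma pihomog_shift_p1 f d r : f \is d.-homog for mnmwgt -> (r <= d)%N ->
  r`!%:R *: pihomog mnmwgt (d - r) (shift_p1 f) = f^`M(ord0, r).
Proof.
move=> /dhomogP hf hr; rewrite (mpolyE f) /shift_p1 [_ \mPo _]raddf_sum.
rewrite [pihomog _ _ _]linear_sum [RHS]linear_sum scaler_sumr /=.
rewrite big_seq [RHS]big_seq; apply: eq_bigr => m hm.
rewrite comp_mpolyZ !linearZ /= -[_ \mPo _]/(shift_p1 _).
by rewrite -(pihomog_shift_p1_X (hf m hm) hr) !scalerA mulrC.
Qed.

End Taylor.
End Substitution.

Section EpsSubst.
Variables (R : realFieldType) (n : nat).
Implicit Type f : {mpoly R[n]}.

Definition eps_subst : (n + n).-tuple {mpoly R[n]} :=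
  [tuple match split i with inl k => (eps_pt R k)%:MP | inr k => 'X_k end | i < n + n].

Lemma eps_subst_l i : 'X_(lshift n i) \mPo eps_subst = (eps_pt R i)%:MP.
Proof.
rewrite comp_mpolyXU -tnth_nth tnth_mktuple.
by rewrite (_ : lshift n i = unsplit (inl i)) // unsplitK.
Qed.

Lemma eps_subst_r i : 'X_(rshift n i) \mPo eps_subst = 'X_i.
Proof.
rewrite comp_mpolyXU -tnth_nth tnth_mktuple.
by rewrite (_ : rshift n i = unsplit (inr i)) // unsplitK.
Qed.

Lemma inx_eps_subst f : inx f \mPo eps_subst = (eps f)%:MP.
Proof.
rewrite /inx comp_mpolyA -comp_mpoly_cst; congr comp_mpoly.
by apply: eq_from_tnth => i; rewrite !tnth_mktuple eps_subst_l.
Qed.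

Lemma iny_eps_subst f : iny f \mPo eps_subst = f.
Proof.
rewrite /iny comp_mpolyA -[RHS]comp_mpoly_id; congr comp_mpoly.
by apply: eq_from_tnth => i; rewrite !tnth_mktuple eps_subst_r.
Qed.

Lemma coprod_eps_subst f : coprod f \mPo eps_subst = shift_p1 f.
Proof.
rewrite /coprod comp_mpolyA; congr comp_mpoly.
apply: eq_from_tnth => i; rewrite !tnth_mktuple raddfD /=.
by rewrite eps_subst_l eps_subst_r addrC.
Qed.

End EpsSubst.

Section ScalarProduct.
Variables (R : realFieldType) (n : nat) (alpha : R).
Implicit Types f g : {mpoly R[n]}.

Lemma jscalEr f g : jscal alpha f g = \sum_(m <- msupp g) f@_m * g@_m * zee alpha m.
Proof.
rewrite /jscal (bigID (mem (msupp g))) [RHS](bigID (mem (msupp f))) /=.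
rewrite [X in _ + X = _]big1 => [|m /memN_msupp_eq0 ->]; last by rewrite mulr0 mul0r.
rewrite [X in _ = _ + X]big1 => [|m /memN_msupp_eq0 ->]; last by rewrite !mul0r.
rewrite !addr0 -big_filter -[RHS]big_filter; apply/perm_big/uniq_perm.
- by rewrite filter_uniq ?msupp_uniq.
- by rewrite filter_uniq ?msupp_uniq.
by move=> m; rewrite !mem_filter andbC.
Qed.

Lemma jscal_suml I (s : seq I) (a : I -> R) (F : I -> {mpoly R[n]}) g :
  jscal alpha (\sum_(i <- s) a i *: F i) g = \sum_(i <- s) a i * jscal alpha (F i) g.
Proof.
rewrite jscalEr; under eq_bigr do rewrite raddf_sum /= !mulr_suml.
rewrite exchange_big /=; apply: eq_bigr => i _.
rewrite jscalEr mulr_sumr; apply: eq_bigr => m _.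
by rewrite mcoeffZ !mulrA.
Qed.

Hypothesis alpha_gt0 : 0 < alpha.

Lemma zee_gt0 (m : 'X_{1..n}) : 0 < zee alpha m.
Proof. by apply: prodr_gt0 => i _; rewrite !mulr_gt0 ?exprn_gt0 ?ltr0n ?fact_gt0. Qed.

Lemma jscal_gt0 f : f != 0 -> 0 < jscal alpha f f.
Proof.
move=> nz_f; have term_ge0 (m : 'X_{1..n}) : 0 <= f@_m * f@_m * zee alpha m.
  by rewrite -expr2 mulr_ge0 ?sqr_ge0 ?ltW ?zee_gt0.
rewrite lt_def sumr_ge0 // andbT psumr_neq0 //; apply/hasP.
exists (mlead f); first exact: mlead_supp.
by rewrite -expr2 mulr_gt0 ?zee_gt0 // exprn_even_gt0 //= -mcoeff_msupp mlead_supp.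
Qed.

End ScalarProduct.

Lemma pweightE n (m : 'X_{1..n}) : pweight m = mnmwgt m.
Proof. by apply: eq_bigr => i _; rewrite mulnC. Qed.

Lemma phomogE (R : realFieldType) n d (f : {mpoly R[n]}) :
  phomog d f = (f \is d.-homog for mnmwgt).
Proof. by rewrite dhomogE; apply: eq_all => m; rewrite /= pweightE. Qed.

Section Jack.
Variables (R : realFieldType) (n : nat) (alpha : R).
Variables (J : seq nat -> {mpoly R[n]}) (S : seq nat -> seq nat -> {mpoly R[n]}).
Hypothesis jackJ : is_jack alpha J.

Lemma jack_homog la : la \in parts_upto n -> J la \is (psize la).-homog for mnmwgt.
Proof. by rewrite mem_parts_upto => /andP[hp hn]; have [] := jackJ hp hn; rewrite phomogE. Qed.

Lemma jack_neq0 la : la \in parts_upto n -> J la != 0.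
Proof.
rewrite mem_parts_upto => /andP[hp hn]; have [_ _ he _] := jackJ hp hn.
by apply: contra_eq_neq he => ->; rewrite /eps meval0 eq_sym oner_neq0.
Qed.

Lemma pihomog_jack la d : la \in parts_upto n ->
  pihomog mnmwgt d (J la) = (psize la == d)%:R *: J la.
Proof.
move=> hla; have hh := jack_homog hla.
case: eqP => [<-|/eqP hd]; first by rewrite scale1r pihomog_dE.
by rewrite scale0r (pihomog_ne0 hd hh).
Qed.

Hypothesis skewS : is_skew_jack J S.

Lemma shift_p1_jack la : la \in parts_upto n ->
  shift_p1 (J la) = \sum_(mu <- subparts la) eps (S la mu) *: J mu.
Proof.
rewrite mem_parts_upto => /andP[hp hn].
rewrite -coprod_eps_subst (skewS hp hn) rmorph_sum /=; apply: eq_bigr => mu _.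
by rewrite rmorphM /= inx_eps_subst iny_eps_subst mul_mpolyC.
Qed.

Lemma jscal_jack k mu : k \in parts_upto n -> mu \in parts_upto n -> k != mu ->
  jscal alpha (J k) (J mu) = 0.
Proof.
move=> hk hmu hne; have [eq_sz|ne_sz] := eqVneq (psize mu) (psize k).
  have [_ _ _ -> //] := jackJ (part_parts_upto hk) (psize_parts_upto hk).
    exact: part_parts_upto hmu.
  by apply/eqP; rewrite eq_sym.
rewrite /jscal big_seq big1 // => m hm.
rewrite (dhomog_nemf_coeff (jack_homog hmu)) ?mulr0 ?mul0r //.
by rewrite (dhomog_mf (jack_homog hk) hm) eq_sym.
Qed.

Lemma jack_coef_unique (s t : seq (seq nat)) (a b : seq nat -> R) mu :
  0 < alpha -> uniq s -> uniq t ->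
  {subset s <= parts_upto n} -> {subset t <= parts_upto n} -> mu \in s -> mu \in t ->
  \sum_(k <- s) a k *: J k = \sum_(k <- t) b k *: J k -> a mu = b mu.
Proof.
move=> alpha_gt0 us ut ss st ms mt /(congr1 (jscal alpha ^~ (J mu))).
have coef (c : seq nat -> R) u : uniq u -> {subset u <= parts_upto n} -> mu \in u ->
    \sum_(k <- u) c k * jscal alpha (J k) (J mu) = c mu * jscal alpha (J mu) (J mu).
  move=> uu su mu_u; rewrite (bigD1_seq mu) //= big1_seq ?addr0 // => k /andP[hk ku].
  by rewrite jscal_jack ?su ?mulr0.
rewrite !jscal_suml !coef // => /mulIf; apply.
exact/lt0r_neq0/jscal_gt0/jack_neq0/ss.
Qed.

End Jack.

Section JackDerivative.
Variables (R : realFieldType) (n : nat) (alpha : R).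
Variables (J : seq nat -> {mpoly R[n.+1]}) (S : seq nat -> seq nat -> {mpoly R[n.+1]}).
Hypotheses (jackJ : is_jack alpha J) (skewS : is_skew_jack J S).

Lemma mderiv_jack la : la \in parts_upto n.+1 -> (0 < psize la)%N ->
  (J la)^`M(ord0) =
    \sum_(mu <- subparts la | psize mu == (psize la).-1) eps (S la mu) *: J mu.
Proof.
move=> hla hd; have := pihomog_shift_p1 (jack_homog jackJ hla) hd.
rewrite factS fact0 muln1 scale1r nderivn1 => <-.
rewrite (shift_p1_jack skewS hla) linear_sum [RHS]big_mkcond /= subn1.
apply: eq_big_seq => mu hmu; have hn := psize_parts_upto hla.
rewrite linearZ /= (pihomog_jack jackJ) ?(subparts_parts_upto hn hmu) //.
by case: eqP; rewrite ?scale1r ?scale0r ?scaler0.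
Qed.

Lemma mderivn_jack r la : la \in parts_upto n.+1 -> (r <= psize la)%N ->
  (J la)^`M(ord0, r) =
    \sum_(mu <- parts_upto n.+1) chain_sum (fun a b => eps (S a b)) r la mu *: J mu.
Proof.
elim: r la => [|r IH] la hla hr.
  rewrite mderivn0 (bigD1_seq la) ?parts_upto_uniq //= chain_sum0 eqxx scale1r.
  by rewrite big1 ?addr0 // => mu hmu; rewrite chain_sum0 eq_sym (negbTE hmu) scale0r.
rewrite mderivSn mderiv_jack //; last exact: leq_trans hr.
under [RHS]eq_bigr do rewrite chain_sumS scaler_suml.
rewrite linear_sum exchange_big /= big_seq_cond [RHS]big_seq_cond.
apply: eq_bigr => nu /andP[hnu /eqP hsz]; have hn := psize_parts_upto hla.
rewrite linearZ /= IH ?(subparts_parts_upto hn hnu) //; last by rewrite hsz; lia.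
by rewrite scaler_sumr; apply: eq_bigr => mu _; rewrite scalerA.
Qed.

End JackDerivative.

Lemma eps_skew_jack_nil (R : realFieldType) (alpha : R)
    (J : seq nat -> {mpoly R[0]}) (S : seq nat -> seq nat -> {mpoly R[0]}) :
  is_jack alpha J -> is_skew_jack J S -> eps (S [::] [::]) = 1.
Proof.
move=> jackJ skewS; have hnil : [::] \in parts_upto 0 by rewrite mem_parts_upto.
have := shift_p1_jack skewS hnil; rewrite shift_p1_0 (_ : subparts [::] = [:: [::]]) //.
rewrite big_seq1 => /eqP; rewrite -subr_eq0 -{1}(scale1r (J _)) -scalerBl scaler_eq0.
by rewrite (negbTE (jack_neq0 jackJ hnil)) orbF subr_eq0 => /eqP <-.
Qed.

Lemma eps_skew_jack_chains (R : realFieldType) n (alpha : R) la mu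
    (J : seq nat -> {mpoly R[n]}) (S : seq nat -> seq nat -> {mpoly R[n]}) :
  0 < alpha -> is_part la -> is_part mu -> part_sub mu la -> (psize la <= n)%N ->
  is_jack alpha J -> is_skew_jack J S ->
  let r := (psize la - psize mu)%N in
  eps (S la mu) = (r`!%:R)^-1 * chain_sum (fun a b => eps (S a b)) r la mu.
Proof.
move=> alpha_gt0 hpl hpm hsub hn jackJ skewS r.
have hmu := mem_subparts hpm hsub.
have hla : la \in parts_upto n by rewrite mem_parts_upto hpl.
case: n J S hn hla jackJ skewS => [|n] J S hn hla jackJ skewS.
  have hl : la = [::] by apply: part_nil => //; lia.
  have hm : mu = [::].
    by apply: part_nil => //; have := psize_subparts hmu; rewrite hl /psize /=; lia.
  subst la mu; rewrite chain_sum0 eqxx fact0 invr1 mul1r.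
  exact: eps_skew_jack_nil jackJ skewS.
have hr : (r <= psize la)%N by rewrite leq_subr.
have := pihomog_shift_p1 (jack_homog jackJ hla) hr.
rewrite (shift_p1_jack skewS hla) (mderivn_jack jackJ skewS hla hr).
rewrite [pihomog _ _ _]linear_sum scaler_sumr big_seq.
under eq_bigr => k hk do
  rewrite linearZ /= (pihomog_jack jackJ) ?(subparts_parts_upto hn hk) // !scalerA.
rewrite -big_seq.
move/(jack_coef_unique (mu := mu) jackJ alpha_gt0 (subparts_uniq la) (parts_upto_uniq _)
  (subparts_parts_upto hn) (fun k hk => hk) hmu (subparts_parts_upto hn hmu))
  => /= <-.
have -> : (psize mu == psize la - r)%N by apply/eqP; rewrite subKn // psize_subparts.
by rewrite mulr1 mulKf // pnatr_eq0 -lt0n fact_gt0.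
Qed.

Unset Implicit Arguments.

Theorem lemmaA (R : realFieldType) (alpha : R) (la mu : seq nat)
    (J : seq nat -> Lam R (psize la))
    (S : seq nat -> seq nat -> Lam R (psize la)) :
  0 < alpha ->
  is_part la -> is_part mu -> part_sub mu la ->
  is_jack alpha J -> is_skew_jack J S ->
  let r := (psize la - psize mu)%N in
  eps (S la mu) =
    (r`!%:R)^-1 *
    \sum_(c <- chains r la mu)
       \prod_(i < r) eps (S (nth [::] c i) (nth [::] c i.+1)).
Proof.
move=> alpha_gt0 hpl hpm hsub jackJ skewS.
exact: eps_skew_jack_chains alpha_gt0 hpl hpm hsub (leqnn _) jackJ skewS.
Qed.
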